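(* Let $G$ be a DAG, let $V^\infty\subseteq V(G)$, and let $T\subseteq V^\infty$. Let $M,Z\subseteq V(G)$ with $Z\cap T=\emptyset$. Suppose $M$ intersects every odd $T$-path in $G$ and $s_G(M)\subseteq Z\subseteq V(G)\setminus M$. Let $(G',V'^\infty):=\mathrm{torso}(G,V^\infty,Z)$. Then every node of $s_{G'}(M)$ has total degree at most one in $G'\setminus M$. Here shadows in $G'$ are taken with respect to the same terminal set $T$.
   Context: Paths are simple directed paths; a path is odd if it has an odd number of edges; a $T$-path has both ends in $T$. $\mathcal{R}_H(X)$ is the set of nodes reachable from $X$ in $H$, including $X$. For a graph $H\supseteq T$ and $M\subseteq V(H)$, the shadows are: - $f_H(M):=V(H\setminus M)\setminus\mathcal{R}_{H\setminus M}(T)$; - $r_H(M)$ is the set of nodes $v\in V(H)\setminus M$ with no path to $T$ in $H\setminus M$; - $s_H(M):=f_H(M)\cup r_H(M)$. Parity-preserving torso. Given a DAG $G$ and $Z,V^\infty\subseteq V(G)$, first form $G_0$ from $G\setminus Z$ by adding an edge $u\rightarrow v$ for every pair of distinct $u,v\in V(G)\setminus Z$ such that $G$ has an odd $u\rightarrow v$ path with all internal nodes in $Z$. Then, for every pair of distinct $u,v\in V(G)\setminus Z$ such that $G$ has an even $u\rightarrow v$ path with all internal nodes in $Z$, add a new node $x_{uv}$ and edges $u\rightarrow x_{uv}$, $x_{uv}\rightarrow v$. The result is $G'$. Set $V'^\infty:=(V^\infty\setminus Z)\cup\{\text{new nodes}\}$, and $\mathrm{torso}(G,V^\infty,Z):=(G',V'^\infty)$.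 *)

From mathcomp Require Import all_boot.
Set Implicit Arguments. Unset Strict Implicit. Unset Printing Implicit Defensive.

Fixpoint walk (U : Type) (E : U -> U -> Prop) (x : U) (p : seq U) : Prop :=
  match p with
  | [::] => True
  | y :: q => E x y /\ walk E y q
  end.

(* a (simple, directed) path in the graph (S, E): nonempty, all nodes in S,
   consecutive nodes joined by edges, no repeated node.
   Its number of edges is (size p).-1. *)
Definition is_path (U : eqType) (S : U -> Prop) (E : U -> U -> Prop) (p : seq U) : Prop :=
  match p with
  | [::] => False
  | x :: q => [/\ walk E x q, uniq p & forall v, v \in p -> S v]
  end.

Definition del (U : Type) (S : U -> Prop) (M : U -> Prop) : U -> Prop :=
  fun v => S v /\ ~ M v.

Definition connects (U : eqType) (S : U -> Prop) (E : U -> U -> Prop) (a b : U) : Prop :=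
  exists q, is_path S E (a :: q) /\ last a q = b.

Definition reach (U : eqType) (S : U -> Prop) (E : U -> U -> Prop) (X : U -> Prop) (v : U) : Prop :=
  exists x, X x /\ connects S E x v.

Definition fshadow (U : eqType) (S : U -> Prop) (E : U -> U -> Prop) (T M : U -> Prop) (v : U) : Prop :=
  del S M v /\ ~ reach (del S M) E T v.

Definition rshadow (U : eqType) (S : U -> Prop) (E : U -> U -> Prop) (T M : U -> Prop) (v : U) : Prop :=
  del S M v /\ ~ (exists t, T t /\ connects (del S M) E v t).

Definition shadow (U : eqType) (S : U -> Prop) (E : U -> U -> Prop) (T M : U -> Prop) (v : U) : Prop :=
  fshadow S E T M v \/ rshadow S E T M v.

Definition acyclic (U : Type) (E : U -> U -> Prop) : Prop :=
  forall x q, q <> [::] -> walk E x q -> last x q = x -> False.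

Section Torso.
Variables (V : finType) (e : rel V).

(* G has a u -> v path u :: r ++ [v] whose internal nodes r all lie in Z,
   and its number of edges (size r).+1 has parity b (true = odd) *)
Definition Zpath (Z : {set V}) (u v : V) (b : bool) : Prop :=
  exists r, [/\ is_path (fun _ => True) (fun x y => e x y) (u :: rcons r v),
               (forall w, w \in r -> w \in Z) & odd (size r).+1 = b].

(* vertices of G': inl v for v in V(G)\Z, and inr (u,v) for the new node x_uv *)
Definition torsoV : finType := (V + (V * V))%type.

Definition torso_S (Z : {set V}) (x : torsoV) : Prop :=
  match x with
  | inl v => v \notin Z
  | inr (u, v) => [/\ u != v, u \notin Z, v \notin Z & Zpath Z u v false]
  end.

Definition torso_E (Z : {set V}) (x y : torsoV) : Prop :=
  match x, y with
  | inl u, inl v => [/\ u != v, u \notin Z, v \notin Z & Zpath Z u v true]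
  | inl u, inr (a, b) => u = a /\ torso_S Z (inr (a, b))
  | inr (a, b), inl v => v = b /\ torso_S Z (inr (a, b))
  | inr _, inr _ => False
  end.

Definition torso_inf (Vinf Z : {set V}) (x : torsoV) : Prop :=
  match x with
  | inl v => v \in Vinf /\ v \notin Z
  | inr _ => torso_S Z x
  end.

Definition lift_set (A : {set V}) (x : torsoV) : Prop :=
  match x with
  | inl v => v \in A
  | inr _ => False
  end.
End Torso.

(* Every node of G outside Z and M escapes s_G(M), so it is reachable from T
   and reaches T in G \ M.  Replacing each maximal run of Z-nodes on such a
   path by the corresponding torso edge, or by the detour through x_uv, carries
   these paths over to G' \ M.  Hence s_G'(M) consists of new nodes x_uv only
   (encoded as [inr (u, v)]), whose only possible neighbours are u (incoming)
   and v (outgoing); using both would put x_uv on a path from T to T in G' \ M. *)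
From Stdlib Require Import Classical.
From mathcomp Require Import all_boot.
Set Implicit Arguments. Unset Strict Implicit. Unset Printing Implicit Defensive.

Section Paths.
Variables (U : eqType) (E : U -> U -> Prop).

Lemma walk_cat x p1 p2 :
  walk E x (p1 ++ p2) <-> walk E x p1 /\ walk E (last x p1) p2.
Proof.
elim: p1 x => [|y p IH] x /=; first by tauto.
by rewrite IH; tauto.
Qed.

Lemma is_path_sub (S1 S2 : U -> Prop) p :
  (forall v, S1 v -> S2 v) -> is_path S1 E p -> is_path S2 E p.
Proof. by case: p => // x p S12 [hw hu hS]; split=> // v /hS /S12. Qed.

Lemma is_path_split (S : U -> Prop) x p y q :
  is_path S E (x :: p ++ y :: q) ->
  is_path S E (x :: rcons p y) /\ is_path S E (y :: q).
Proof.
have e1 : x :: p ++ y :: q = (x :: rcons p y) ++ q by rewrite /= cat_rcons.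
have e2 : x :: p ++ y :: q = (x :: p) ++ y :: q by [].
move=> [/walk_cat [hwp [hy hwq]] hu hS].
split; split.
- by rewrite -cats1; apply/walk_cat.
- by apply: subseq_uniq hu; rewrite e1 prefix_subseq.
- by move=> v hv; apply: hS; rewrite e1 mem_cat hv.
- exact: hwq.
- by apply: subseq_uniq hu; rewrite e2 suffix_subseq.
- by move=> v hv; apply: hS; rewrite e2 mem_cat hv orbT.
Qed.

Variable S : U -> Prop.

Lemma connects_refl x : S x -> connects S E x x.
Proof. by move=> Sx; exists [::]; split=> //; split=> // v; rewrite inE => /eqP ->. Qed.

Lemma connects_suffix x p z :
  is_path S E (x :: p) -> z \in x :: p -> connects S E z (last x p).
Proof.
elim: p x => [|y q IH] x [/= hw hu hS]; rewrite inE.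
  by move=> /eqP ->; apply: connects_refl; apply: hS; rewrite inE.
case/orP => [/eqP ->|hz]; first by exists (y :: q).
case: hw => _ hw; move: hu => /andP [_ hu].
by apply: IH => //; split=> // v hv; apply: hS; rewrite inE hv orbT.
Qed.

Lemma connects_cons x y z : S x -> E x y -> connects S E y z -> connects S E x z.
Proof.
move=> Sx exy [r [[hw hu hS] <-]].
case hx: (x \in y :: r); first exact: connects_suffix.
exists (y :: r); split=> //; split=> //=; first by rewrite hx.
by move=> v; rewrite inE => /orP [/eqP -> //|]; apply: hS.
Qed.

Lemma connects_of_walk x p :
  walk E x p -> (forall v, v \in x :: p -> S v) -> connects S E x (last x p).
Proof.
elim: p x => [|y q IH] x hw hS; first by apply: connects_refl; apply: hS; rewrite inE.
case: hw => exy hw; apply: (connects_cons _ exy (IH _ hw _)).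
  by apply: hS; rewrite inE eqxx.
by move=> v hv; apply: hS; rewrite inE hv orbT.
Qed.

Lemma connects_trans x y z : connects S E x y -> connects S E y z -> connects S E x z.
Proof.
move=> [p [[hwp _ hSp] <-]] [q [[hwq _ hSq] <-]].
rewrite -last_cat; apply: connects_of_walk; first exact/walk_cat.
move=> v; rewrite -cat_cons mem_cat => /orP [/hSp //|hv].
by apply: hSq; rewrite inE hv orbT.
Qed.

End Paths.

Section Torso.
Variables (V : finType) (e : rel V) (Z M : {set V}).

Local Notation GM := (del (fun _ : V => True) (fun v => v \in M)).
Local Notation GM' := (del (torso_S e Z) (lift_set M)).
Local Notation E' := (torso_E e Z).

Lemma torso_in_edge_new a u v : E' a (inr (u, v)) -> a = inl u.
Proof. by case: a => [x [->]|[]]. Qed.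

Lemma torso_out_edge_new b u v : E' (inr (u, v)) b -> b = inl v.
Proof. by case: b => [x [->]|[]]. Qed.

Lemma torso_connects_Zpath t y b :
  t \notin M -> y \notin M -> t \notin Z -> y \notin Z -> t != y -> Zpath e Z t y b ->
  connects GM' E' (inl t) (inl y).
Proof.
move=> /negP tM /negP yM tZ yZ ty.
have tGM' : GM' (inl t) by [].
have yGM' : GM' (inl y) by [].
case: b => hZ.
  have ety : E' (inl t) (inl y) by split.
  exact: connects_cons tGM' ety (connects_refl _ yGM').
have xS : torso_S e Z (inr (t, y)) by split.
have xGM' : GM' (inr (t, y)) by split.
have etx : E' (inl t) (inr (t, y)) by split.
have exy : E' (inr (t, y)) (inl y) by split.
exact: connects_cons tGM' etx (connects_cons xGM' exy (connects_refl _ yGM')).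
Qed.

(* [t :: r] is the part of the path read since its last node [t] outside Z. *)
Lemma torso_connects_of_path q : forall t r,
  t \notin Z -> {subset r <= Z} -> is_path GM (fun a b => e a b) (t :: r ++ q) ->
  last t (r ++ q) \notin Z -> connects GM' E' (inl t) (inl (last t (r ++ q))).
Proof.
elim: q => [|y q IH] t r tZ rZ hp.
  rewrite cats0; case/lastP: r rZ hp => [|r y] rZ hp.
    move=> _; apply: connects_refl; split=> //=.
    by case: hp => _ _ /(_ t (mem_head _ _)) [].
  by rewrite last_rcons rZ // mem_rcons mem_head.
have [yZ|yZ] := boolP (y \in Z).
  rewrite -cat_rcons in hp *; apply: IH => // w.
  by rewrite mem_rcons inE => /orP [/eqP -> //|/rZ].
rewrite last_cat /= => qZ.
have [hpre hsuf] := is_path_split hp.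
have ty : t != y.
  case: hpre => _ /andP [tr _] _; apply: contraNneq tr => <-.
  by rewrite mem_rcons mem_head.
have [_ /negP tM] : GM t by case: (hpre) => _ _; apply; rewrite mem_head.
have [_ /negP yM] : GM y by case: (hsuf) => _ _; apply; rewrite mem_head.
apply: connects_trans (IH y [::] yZ _ hsuf qZ) => //.
apply: (@torso_connects_Zpath _ _ (odd (size r).+1)) => //.
by exists r; split=> //; apply: is_path_sub hpre.
Qed.

Lemma torso_connects a b :
  a \notin Z -> b \notin Z -> connects GM (fun x y => e x y) a b ->
  connects GM' E' (inl a) (inl b).
Proof.
move=> aZ bZ [q [hp eb]]; subst b.
by apply: (@torso_connects_of_path q a [::]) => //= w; rewrite in_nil.
Qed.

Variable T : {set V}.
Hypothesis ZT : [disjoint Z & T].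
Hypothesis shadow_sub : forall v,
  shadow (fun _ => True) (fun a b => e a b) (fun v => v \in T) (fun v => v \in M) v ->
  v \in Z.

Local Notation shadow' := (shadow (torso_S e Z) E' (lift_set T) (lift_set M)).

Lemma terminal_notin_Z t : t \in T -> t \notin Z.
Proof. by move=> tT; apply/negP => tZ; rewrite (disjointFr ZT tZ) in tT. Qed.

Lemma reach_notin_Z x :
  x \notin Z -> x \notin M -> reach GM (fun a b => e a b) (fun v => v \in T) x.
Proof.
move=> /negP xZ /negP xM; apply: NNPP => nr.
by apply/xZ/shadow_sub; left.
Qed.

Lemma coreach_notin_Z x : x \notin Z -> x \notin M ->
  exists t, t \in T /\ connects GM (fun a b => e a b) x t.
Proof.
move=> /negP xZ /negP xM; apply: NNPP => nr.
by apply/xZ/shadow_sub; right.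
Qed.

Lemma torso_reach_old x :
  x \notin Z -> x \notin M -> reach GM' E' (lift_set T) (inl x).
Proof.
move=> xZ xM; have [t [tT htx]] := reach_notin_Z xZ xM.
by exists (inl t); split=> //; exact: torso_connects (terminal_notin_Z tT) xZ htx.
Qed.

Lemma torso_coreach_old x :
  x \notin Z -> x \notin M -> exists t, lift_set T t /\ connects GM' E' (inl x) t.
Proof.
move=> xZ xM; have [t [tT hxt]] := coreach_notin_Z xZ xM.
by exists (inl t); split=> //; exact: torso_connects xZ (terminal_notin_Z tT) hxt.
Qed.

Lemma torso_shadow_new w : shadow' w -> exists u v, w = inr (u, v).
Proof.
case: w => [x|[u v] _]; last by exists u, v.
move=> sh; have [/= xZ /negP xM] : GM' (inl x) by case: sh => -[].
by case: sh => -[_ []]; [apply: torso_reach_old | apply: torso_coreach_old].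
Qed.

Lemma torso_shadow_not_in_and_out w a b :
  shadow' w -> E' a w -> GM' a -> E' w b -> GM' b -> False.
Proof.
move=> sh; have [u [v ew]] := torso_shadow_new sh; subst w.
have wGM' : GM' (inr (u, v)) by case: sh => -[].
move=> eaw uGM' ewb vGM'.
move: (torso_in_edge_new eaw) (torso_out_edge_new ewb) => ea eb; subst a b.
case: (uGM') (vGM') => [/= uZ /negP uM] [/= vZ /negP vM].
case: sh => -[_ []].
- have [t [tT htu]] := torso_reach_old uZ uM.
  exists t; split=> //.
  exact: connects_trans htu (connects_cons uGM' eaw (connects_refl _ wGM')).
- have [t [tT hvt]] := torso_coreach_old vZ vM.
  by exists t; split=> //; exact: connects_cons wGM' ewb hvt.
Qed.

End Torso.

Theorem lemma2p5 (V : finType) (e : rel V) (Vinf T M Z : {set V}) :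
  acyclic (fun x y => e x y) ->
  T \subset Vinf ->
  [disjoint Z & T] ->
  (forall x q, is_path (fun _ => True) (fun a b => e a b) (x :: q) ->
     odd (size q) -> x \in T -> last x q \in T -> has (mem M) (x :: q)) ->
  (forall v, shadow (fun _ => True) (fun a b => e a b) (fun v => v \in T) (fun v => v \in M) v -> v \in Z) ->
  [disjoint Z & M] ->
  (* every node w of s_{G'}(M) has total degree <= 1 in G' \ M:
     any two edges of G' \ M incident with w coincide *)
  forall w : torsoV V,
    shadow (torso_S e Z) (torso_E e Z) (lift_set T) (lift_set M) w ->
    forall a b c d : torsoV V,
      torso_E e Z a b -> del (torso_S e Z) (lift_set M) a -> del (torso_S e Z) (lift_set M) b ->
      (a = w \/ b = w) ->
      torso_E e Z c d -> del (torso_S e Z) (lift_set M) c -> del (torso_S e Z) (lift_set M) d ->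
      (c = w \/ d = w) ->
      (a, b) = (c, d).
Proof.
move=> _ _ ZT _ shZ _ w sh a b c d eab Ga Gb aw ecd Gc Gd cw.
have [u [v ew]] := torso_shadow_new ZT shZ sh.
have no_in_out := torso_shadow_not_in_and_out ZT shZ sh.
subst w; case: aw => ea; case: cw => ec; subst.
- by rewrite (torso_out_edge_new eab) (torso_out_edge_new ecd).
- by case: (no_in_out _ _ ecd Gc eab Gb).
- by case: (no_in_out _ _ eab Ga ecd Gd).
- by rewrite (torso_in_edge_new eab) (torso_in_edge_new ecd).
Qed.
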